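(* Let $p$ be a prime, let $c,d$ be positive integers, let $X$ be a set with $d$ elements, let $L_c(X)$ be the free nilpotent $\mathbb{Z}_p$-Lie algebra of class $c$ on $X$, regarded inside $\widetilde{L}_c(X)=L_c(X)\otimes_{\mathbb{Z}_p}\mathbb{Q}_p$, let $$\widehat{L}_c(X)=L_c(X)+\tfrac{1}{p}\gamma_2(L_c(X))+\dots+\tfrac{1}{p^{c-1}}\gamma_c(L_c(X)),$$ let $I$ be an ideal of $L_c(X)$ and let $$\widehat{I}=I+\tfrac{1}{p}[I,L_c(X)]+\dots+\tfrac{1}{p^{c-1}}[I,{}_{c-1}L_c(X)].$$ Then: (a) the order $\left|(L_c(X)\cap\widehat{I})/I\right|$ is bounded by a function of $p,c,d$ only; (b) the index $\left|\widehat{L}_c(X)/\widehat{I} : (L_c(X)+\widehat{I})/\widehat{I}\right|$ is bounded by a function of $p,c,d$ only.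
   Context: $L_c(X)$ is the free $\mathbb{Z}_p$-Lie algebra on $X$ modulo the $(c+1)$-st term of its lower central series; $\gamma_1(L)=L$, $\gamma_{i+1}(L)=[\gamma_i(L),L]$; $[I,{}_iL]=[\cdots[[I,L],L],\dots,L]$ with $i$ copies of $L$. Brackets of subsets denote $\mathbb{Z}_p$-spans of brackets. *)

From HB Require Import structures.
From mathcomp Require Import all_boot all_order all_algebra.
Set Implicit Arguments. Unset Strict Implicit. Unset Printing Implicit Defensive.
Import Order.TTheory GRing.Theory Num.Theory.
Local Open Scope ring_scope.

(* The ring of p-adic integers, characterised up to isomorphism:          *)
(* an integral domain R which is a DVR with uniformizer p (every nonzero  *)
(* element is a unit times a power of p, and p is not a unit), whose      *)
(* residue field R/pR is represented by 0,1,...,p-1, and which is p-adically *)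
(* complete.  (Such an R is isomorphic to Z_p.)                           *)
Definition is_Zp (p : nat) (R : idomainType) : Prop :=
  [/\ (p%:R : R) \isn't a GRing.unit,
      (forall x : R, x != 0 ->
         exists (n : nat) (u : R), u \is a GRing.unit /\ x = u * p%:R ^+ n),
      (forall x : R, exists2 k : nat, (k < p)%N & exists y : R, x = k%:R + p%:R * y)
    & (forall x : nat -> R,
         (forall n, exists y : R, x n.+1 - x n = p%:R ^+ n * y) ->
         exists l : R, forall n, exists y : R, l - x n = p%:R ^+ n * y)].

Section FreeNilpotent.
Variables (R : idomainType) (d c : nat).

(* Q_p = fraction field of Z_p *)
Definition Kf := {fraction R}.

(* Elements of the truncated free associative K-algebra on X = 'I_d,     *)
(* as coefficient functions on words (only words of length <= c matter). *)
Definition tens := seq 'I_d -> Kf.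

Definition tzero : tens := fun _ => 0.
Definition tadd (f g : tens) : tens := fun w => f w + g w.
Definition tsub (f g : tens) : tens := fun w => f w - g w.
Definition tscale (a : Kf) (f : tens) : tens := fun w => a * f w.
Definition tmul (f g : tens) : tens := fun w =>
  if (size w <= c)%N then \sum_(i < (size w).+1) f (take i w) * g (drop i w) else 0.
Definition tbr (f g : tens) : tens := tsub (tmul f g) (tmul g f).
Definition tgen (i : 'I_d) : tens := fun w => (w == [:: i])%:R.

(* L_c(X): the Z_p-Lie subalgebra generated by X inside the truncated     *)
(* free associative Q_p-algebra, i.e. the free nilpotent Z_p-Lie algebra  *)
(* of class c on X (regarded inside L_c(X) (x) Q_p).                      *)
Inductive Lc : tens -> Prop :=
  | Lc_gen i : Lc (tgen i)
  | Lc_zero : Lc tzero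
  | Lc_add f g : Lc f -> Lc g -> Lc (tadd f g)
  | Lc_scale (a : R) f : Lc f -> Lc (tscale (@FracField.tofrac R a) f)
  | Lc_br f g : Lc f -> Lc g -> Lc (tbr f g).

Inductive brspan (A B : tens -> Prop) : tens -> Prop :=
  | bs_br a b : A a -> B b -> brspan A B (tbr a b)
  | bs_zero : brspan A B tzero
  | bs_add f g : brspan A B f -> brspan A B g -> brspan A B (tadd f g)
  | bs_scale (a : R) f : brspan A B f -> brspan A B (tscale (@FracField.tofrac R a) f).

Fixpoint brpow (I : tens -> Prop) (i : nat) : tens -> Prop :=
  if i is i'.+1 then brspan (brpow I i') Lc else I.

(* lower central series: gamma_1 = L, gamma_(i+1) = [gamma_i, L] *)
Definition gammaL (i : nat) : tens -> Prop := brpow Lc i.-1.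

Definition is_ideal (I : tens -> Prop) : Prop :=
  [/\ forall f, I f -> Lc f,
      I tzero,
      (forall f g, I f -> I g -> I (tadd f g)),
      (forall (a : R) f, I f -> I (tscale (@FracField.tofrac R a) f))
    & (forall f g, I f -> Lc g -> I (tbr f g))].

Variable p : nat.

Definition hatI (I : tens -> Prop) : tens -> Prop := fun z =>
  exists ys : nat -> tens, (forall i, (i < c)%N -> brpow I i (ys i)) /\
    forall w, z w = \sum_(i < c) (p%:R : Kf) ^- i * ys i w.

Definition Lhat : tens -> Prop := fun z =>
  exists ys : nat -> tens, (forall i, (i < c)%N -> gammaL i.+1 (ys i)) /\
    forall w, z w = \sum_(i < c) (p%:R : Kf) ^- i * ys i w.

Definition sumset (A B : tens -> Prop) : tens -> Prop := fun z =>
  exists a b, A a /\ B b /\ z = tadd a b.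

(* |A / B| <= N  (for B a submodule of A): A is covered by at most N cosets of B *)
Definition quot_le (A B : tens -> Prop) (N : nat) : Prop :=
  exists r : 'I_N -> tens, forall z, A z -> exists j, B (tsub z (r j)).

End FreeNilpotent.

From mathcomp Require Import all_boot all_order all_algebra.
From Stdlib Require Import Classical FunctionalExtensionality Wf_nat.
Set Implicit Arguments. Unset Strict Implicit. Unset Printing Implicit Defensive.
Import Order.TTheory GRing.Theory Num.Theory.
Local Open Scope ring_scope.

(* Let u = p^(c-1).  Multiplication by u maps hat I into I and hat L into L.
   Elements of L_c(X) are Z_p-valued on words and vanish on words longer than c,
   and over the discrete valuation ring Z_p every submodule of such functions is
   spanned by N elements, N the number of words of length at most c.
   (a) M = {z in L | u z in I} contains L ∩ hat I and is spanned by some g_i;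
   reducing the coefficients of z = sum a_i g_i modulo u leaves u sum b_i g_i,
   which lies in I, so the u^N elements sum r_i g_i with 0 <= r_i < u represent
   every coset.  (b) For z in hat L, u z = sum a_i g_i with g_i spanning L, and
   the same reduction shows z is congruent modulo L to some u^-1 sum r_i g_i. *)

Section Modules.
Variables (R : idomainType) (d : nat).
Local Notation tf := (@FracField.tofrac R).
Local Notation T := (tens R d).
Local Notation t0 := (tzero R (d:=d)).

Definition submod (M : T -> Prop) : Prop :=
  [/\ M t0, (forall f g, M f -> M g -> M (tadd f g))
    & (forall a f, M f -> M (tscale (tf a) f))].

Definition lcomb n (a : 'I_n -> R) (g : 'I_n -> T) : T :=
  fun w => \sum_(i < n) tf (a i) * g i w.

Definition integral (z : T) : Prop := exists F : seq 'I_d -> R, forall w, z w = tf (F w).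

Lemma tscale1 (f : T) : tscale 1 f = f.
Proof. by apply: functional_extensionality => w; rewrite /tscale mul1r. Qed.

Lemma tscaleK (s : Kf R) (f : T) : s != 0 -> tscale s^-1 (tscale s f) = f.
Proof. by move=> s0; apply: functional_extensionality => w; rewrite /tscale mulKf. Qed.

Lemma lcombZ n (x : R) (a : 'I_n -> R) (g : 'I_n -> T) :
  lcomb (fun i => x * a i) g = tscale (tf x) (lcomb a g).
Proof.
apply: functional_extensionality => w; rewrite /lcomb /tscale mulr_sumr.
by apply: eq_bigr => i _; rewrite tofracM mulrA.
Qed.

Lemma lcomb_recl n (a : 'I_n.+1 -> R) (g : 'I_n.+1 -> T) :
  lcomb a g = tadd (tscale (tf (a ord0)) (g ord0))
                   (lcomb (fun i => a (lift ord0 i)) (fun i => g (lift ord0 i))).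
Proof. by apply: functional_extensionality => w; rewrite /lcomb big_ord_recl. Qed.

Lemma submod_lcomb (M : T -> Prop) n (a : 'I_n -> R) (g : 'I_n -> T) :
  submod M -> (forall i, M (g i)) -> M (lcomb a g).
Proof.
case=> M0 MD MZ; elim: n a g => [|n IHn] a g Mg.
  by have -> : lcomb a g = t0 by apply: functional_extensionality => w; rewrite /lcomb big_ord0.
by rewrite lcomb_recl; apply: MD; [apply: MZ | apply: IHn].
Qed.

Lemma submod_scale_preim (P Q : T -> Prop) (s : Kf R) :
  submod P -> submod Q -> submod (fun z => P z /\ Q (tscale s z)).
Proof.
case=> P0 PD PZ [Q0 QD QZ]; split.
- suff -> : tscale s t0 = t0 by [].
  by apply: functional_extensionality => w; rewrite /tscale /tzero mulr0.
- move=> f g [Pf Qf] [Pg Qg]; split; first exact: PD.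
  suff -> : tscale s (tadd f g) = tadd (tscale s f) (tscale s g) by apply: QD.
  by apply: functional_extensionality => w; rewrite /tscale /tadd mulrDr.
- move=> a f [Pf Qf]; split; first exact: PZ.
  suff -> : tscale s (tscale (tf a) f) = tscale (tf a) (tscale s f) by apply: QZ.
  by apply: functional_extensionality => w; rewrite /tscale mulrCA.
Qed.

Lemma quot_le_of_sub (A B : T -> Prop) N : (0 < N)%N -> (forall z, A z -> B z) -> quot_le A B N.
Proof.
move=> N_gt0 AB; exists (fun _ => t0) => z /AB Bz; exists (Ordinal N_gt0).
suff -> : tsub z t0 = z by [].
by apply: functional_extensionality => w; rewrite /tsub /tzero subr0.
Qed.

Variable pi : R.
Hypothesis unit_expn : forall x : R, x != 0 ->
  exists (n : nat) (u : R), u \is a GRing.unit /\ x = u * pi ^+ n.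

Lemma exists_dvd_all (J : R -> Prop) : J 0 ->
  exists2 g, J g & forall x, J x -> exists b, x = b * g.
Proof.
move=> J0; case: (classic (exists2 x, J x & x != 0)) => [[x Jx x0]|J_0]; last first.
  exists 0 => // x Jx; exists 0; rewrite mul0r.
  by apply: NNPP => /eqP x0; apply: J_0; exists x.
pose val_in n := exists2 x, J x & exists2 u, u \is a GRing.unit & x = u * pi ^+ n.
have val_x : exists n, val_in n.
  by have [n [u [uU xE]]] := unit_expn x0; exists n, x => //; exists u.
have [n0 [[[g Jg [u0 u0U gE]] min_n0] _]] :=
  @dec_inh_nat_subset_has_unique_least_element val_in (fun m => classic (val_in m)) val_x.
exists g => // y Jy; have [y0|y_neq0] := eqVneq y 0; first by exists 0; rewrite y0 mul0r.
have [n [u [uU yE]]] := unit_expn y_neq0.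
have /ssrnat.leP le_n0n : (n0 <= n)%coq_nat by apply: min_n0; exists y => //; exists u.
exists (u / u0 * pi ^+ (n - n0)); rewrite yE gE mulrACA -exprD subnK // divrK //.
Qed.

Lemma submod_span_of_support (ws : seq (seq 'I_d)) (M : T -> Prop) : submod M ->
  (forall z, M z -> forall w, w \notin ws -> z w = 0) ->
  (forall z, M z -> integral z) ->
  exists2 g : 'I_(size ws) -> T, forall i, M (g i) & forall z, M z -> exists a, z = lcomb a g.
Proof.
elim: ws M => [|w ws IHws] M sM suppM intM.
  exists (fun _ => t0) => [_|z Mz]; first by case: sM.
  exists (fun _ => 0); apply: functional_extensionality => w; rewrite /lcomb big_ord0; exact: suppM.
have [M0 MD MZ] := sM.
pose M' z := M z /\ z w = 0.
have sM' : submod M'.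
  split; first by split.
    by move=> f h [Mf fw] [Mh hw]; split; [apply: MD | rewrite /tadd fw hw addr0].
  by move=> a f [Mf fw]; split; [apply: MZ | rewrite /tscale fw mulr0].
have [g' M'g' spanM'] : exists2 g' : 'I_(size ws) -> T, forall i, M' (g' i)
    & forall z, M' z -> exists a, z = lcomb a g'.
  apply: IHws => // [z [Mz zw] w' w'_notin|z [Mz _]]; last exact: intM.
  have [->//|w'w] := eqVneq w' w; apply: suppM => //.
  by rewrite in_cons negb_or w'w.
have [x0 [g0 Mg0 g0w] dvd_x0] :
    exists2 x0, exists2 g0, M g0 & g0 w = tf x0
    & forall x, (exists2 z, M z & z w = tf x) -> exists b, x = b * x0.
  by apply: exists_dvd_all; exists t0 => //; rewrite /tzero tofrac0.
pose g i := if unlift ord0 i is Some j then g' j else g0.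
have g_lift : (fun i => g (lift ord0 i)) = g'.
  by apply: functional_extensionality => i; rewrite /g liftK.
exists g => [i|z Mz]; first by rewrite /g; case: unlift => [j|//]; case: (M'g' j).
have [F zF] := intM z Mz.
have [b Fw] := dvd_x0 (F w) (ex_intro2 _ _ z Mz (zF w)).
have [a za] : exists a, tadd z (tscale (tf (- b)) g0) = lcomb a g'.
  apply: spanM'; split; first by apply: MD => //; apply: MZ.
  by rewrite /tadd /tscale zF Fw g0w -!tofracM -tofracD mulNr addrN tofrac0.
exists (fun i => if unlift ord0 i is Some j then a j else b).
rewrite lcomb_recl /g unlift_none g_lift.
have -> : (fun i => if unlift ord0 (lift ord0 i) is Some j then a j else b) = a.
  by apply: functional_extensionality => i; rewrite liftK.
rewrite -za; apply: functional_extensionality => w'.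
by rewrite /tadd /tscale rmorphN mulNr addrCA subrr addr0.
Qed.

End Modules.

Section Counting.
Variables (R : idomainType) (d p : nat).
Local Notation T := (tens R d).
Local Notation pi := (p%:R : R).
Hypothesis residue : forall x : R, exists2 k : nat, (k < p)%N & exists y, x = k%:R + pi * y.

Lemma residue_expn m (x : R) : exists2 k : nat, (k < p ^ m)%N & exists y, x = k%:R + pi ^+ m * y.
Proof.
elim: m x => [|m IHm] x; first by exists 0%N => //; exists x; rewrite expr0 mul1r add0r.
have [k1 lt_k1 [y1 ->]] := IHm x; have [k2 lt_k2 [y2 ->]] := residue y1.
exists (k1 + p ^ m * k2)%N.
  rewrite expnS; apply: (@leq_trans (p ^ m + p ^ m * k2)); first by rewrite ltn_add2r.
  by rewrite -mulnS mulnC leq_mul2r lt_k2 orbT.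
by exists y2; rewrite natrD natrM natrX mulrDr addrA exprSr mulrA.
Qed.

Lemma quot_le_span (A B : T -> Prop) n (g : 'I_n -> T) (s : Kf R) m : s != 0 ->
  (forall z, A z -> exists a, tscale s z = lcomb a g) ->
  (forall b, B (tscale s^-1 (lcomb (fun i => pi ^+ m * b i) g))) ->
  quot_le A B ((p ^ m) ^ n).
Proof.
move=> s0 spanA memB.
have cardE : #|{ffun 'I_n -> 'I_(p ^ m)}| = ((p ^ m) ^ n)%N by rewrite card_ffun !card_ord.
pose digits j : {ffun 'I_n -> 'I_(p ^ m)} := enum_val (cast_ord (esym cardE) j).
exists (fun j => tscale s^-1 (lcomb (fun i => (digits j i : nat)%:R) g)) => z /spanA[a za].
have [e aE] : exists e : 'I_n -> 'I_(p ^ m) * R, forall i, a i = (e i).1%:R + pi ^+ m * (e i).2.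
  apply: (@fin_all_exists _ (fun=> ('I_(p ^ m) * R)%type)
            (fun i e => a i = e.1%:R + pi ^+ m * e.2)) => i.
  by have [k lt_k [y ->]] := residue_expn m (a i); exists (Ordinal lt_k, y).
pose j := cast_ord cardE (enum_rank [ffun i => (e i).1]); exists j.
have digitsE : digits j = [ffun i => (e i).1] by rewrite /digits cast_ordK enum_rankK.
suff -> : tsub z (tscale s^-1 (lcomb (fun i => (digits j i : nat)%:R) g))
        = tscale s^-1 (lcomb (fun i => pi ^+ m * (e i).2) g) by [].
apply: functional_extensionality => w.
rewrite /tsub /tscale digitsE -[z w](mulKf s0).
have -> : s * z w = lcomb a g w by rewrite -za.
rewrite -mulrBr /lcomb -sumrB; congr (_ * _); apply: eq_bigr => i _.
by rewrite -mulrBl -tofracB aE ffunE addrC addKr.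
Qed.

End Counting.

Definition words_upto (d c : nat) : seq (seq 'I_d) :=
  flatten [seq [seq tval t | t <- enum {: n.-tuple 'I_d}] | n <- iota 0 c.+1].

Lemma mem_words_upto d c (w : seq 'I_d) : (size w <= c)%N -> w \in words_upto d c.
Proof.
move=> le_wc; apply/flatten_mapP; exists (size w); first by rewrite mem_iota ltnS.
by apply/mapP; exists (in_tuple w); rewrite ?mem_enum.
Qed.

Section FreeNilpotentLie.
Variables (R : idomainType) (d c : nat).
Local Notation tf := (@FracField.tofrac R).
Local Notation T := (tens R d).
Local Notation t0 := (tzero R (d:=d)).

Lemma Lc_submod : submod (Lc c : T -> Prop).
Proof. by split; [exact: Lc_zero | exact: Lc_add | exact: Lc_scale]. Qed.

Lemma Lc_support (z : T) : (0 < c)%N -> Lc c z -> forall w, w \notin words_upto d c -> z w = 0.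
Proof.
move=> c_gt0 Lz w; apply: contraNeq => zw_neq0; apply: mem_words_upto.
rewrite leqNgt; apply: contra zw_neq0 => lt_cw; apply/eqP.
elim: Lz => [i||f g _ IHf _ IHg|a f _ IHf|f g _ _ _ _].
- by rewrite /tgen; case: eqP => // wE; move: lt_cw; rewrite wE ltnNge c_gt0.
- by [].
- by rewrite /tadd IHf IHg addr0.
- by rewrite /tscale IHf mulr0.
- by rewrite /tbr /tsub /tmul leqNgt lt_cw subr0.
Qed.

Lemma Lc_integral (z : T) : Lc c z -> integral z.
Proof.
have tmul_integral (f g : T) (F G : seq 'I_d -> R) :
    (forall w, f w = tf (F w)) -> (forall w, g w = tf (G w)) ->
    forall w, tmul c f g w = tf (if (size w <= c)%N then
      \sum_(i < (size w).+1) F (take i w) * G (drop i w) else 0).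
  move=> fF gG w; rewrite /tmul; case: ifP => _; last by rewrite tofrac0.
  by rewrite rmorph_sum; apply: eq_bigr => i _; rewrite fF gG rmorphM.
elim=> [i||f g _ [F fF] _ [G gG]|a f _ [F fF]|f g _ [F fF] _ [G gG]].
- by exists (fun w => (w == [:: i])%:R) => w; rewrite /tgen rmorph_nat.
- by exists (fun _ => 0) => w; rewrite tofrac0.
- by exists (fun w => F w + G w) => w; rewrite /tadd fF gG tofracD.
- by exists (fun w => a * F w) => w; rewrite /tscale fF tofracM.
- by eexists => w; rewrite /tbr /tsub (tmul_integral _ _ _ _ fF gG)
                          (tmul_integral _ _ _ _ gG fF) -tofracB.
Qed.

Lemma brpow_closed (P : T -> Prop) : submod P ->
  (forall f g, P f -> Lc c g -> P (tbr c f g)) -> forall i y, brpow c P i y -> P y.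
Proof.
case=> P0 PD PZ Pbr; elim=> [//|i IHi] y /=.
by elim=> [f g /IHi Pf Lg||f g _ Pf _ Pg|a f _ Pf]; [apply: Pbr | | apply: PD | apply: PZ].
Qed.

Variable p : nat.

Lemma hatI0 (I : T -> Prop) : I t0 -> hatI c p I t0.
Proof.
move=> I0; exists (fun _ => t0); split=> [[|i] _ //|w]; first exact: bs_zero.
by rewrite big1 // => i _; rewrite /tzero mulr0.
Qed.

Lemma scale_hat_mem (P : T -> Prop) (ys : nat -> T) (z : T) : (p%:R : R) != 0 ->
  submod P -> (forall f g, P f -> Lc c g -> P (tbr c f g)) ->
  (forall i, (i < c)%N -> brpow c P i (ys i)) ->
  (forall w, z w = \sum_(i < c) (p%:R : Kf R) ^- i * ys i w) ->
  P (tscale (tf (p%:R ^+ c.-1)) z).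
Proof.
move=> p_neq0 sP Pbr Pys zE.
have pK_neq0 : (p%:R : Kf R) != 0 by rewrite -(rmorph_nat tf) tofrac_eq0.
suff -> : tscale (tf (p%:R ^+ c.-1)) z = lcomb (fun i : 'I_c => p%:R ^+ (c.-1 - i)) (fun i => ys i).
  by apply: submod_lcomb => // i; apply: brpow_closed (Pys i (ltn_ord i)).
apply: functional_extensionality => w; rewrite /tscale zE /lcomb mulr_sumr.
apply: eq_bigr => i _; rewrite mulrA; congr (_ * _).
have le_ic : (i <= c.-1)%N by rewrite -ltnS (ltn_predK (ltn_ord i)).
rewrite -(subnK le_ic) exprD addnK rmorphM !rmorphXn rmorph_nat mulrK //.
by rewrite unitrX // unitfE.
Qed.

(* [is_Zp] also admits rings with [p = 0], such as ['F_p]; there [p^-i] is the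
   junk value [0] for [i > 0] and the hat constructions collapse. *)
Lemma hat_sum_char (ys : nat -> T) w : (p%:R : Kf R) = 0 -> (0 < c)%N ->
  \sum_(i < c) (p%:R : Kf R) ^- i * ys i w = ys 0%N w.
Proof.
move=> p0; case: c => // c' _; rewrite big_ord_recl expr0 invr1 mul1r big1 ?addr0 // => i _.
by rewrite p0 expr0n invr0 mul0r.
Qed.

End FreeNilpotentLie.

Theorem proposition3p5 :
  exists f : nat -> nat -> nat -> nat,
  forall (p c d : nat), prime p -> (0 < c)%N -> (0 < d)%N ->
  forall (R : idomainType), is_Zp p R ->
  forall I : tens R d -> Prop, is_ideal c I ->
    (* (a) |(L_c(X) ∩ hat I) / I| <= f p c d *)
    quot_le (fun z => Lc c z /\ hatI c p I z) I (f p c d) /\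
    (* (b) |hat L / hat I : (L + hat I) / hat I| = |hat L : L + hat I| <= f p c d *)
    quot_le (Lhat c p) (sumset (Lc c) (hatI c p I)) (f p c d).
Proof.
exists (fun p c d => (p ^ c.-1) ^ size (words_upto d c))%N.
move=> p c d p_pr c_gt0 _ R [_ unit_expn residue _] I [_ I0 ID IZ Ibr].
have sI : submod I by [].
have sL := @Lc_submod R d c.
have [p0|p_neq0] := eqVneq (p%:R : R) 0.
  have pK0 : (p%:R : Kf R) = 0 by rewrite -(rmorph_nat (@FracField.tofrac R)) p0 rmorph0.
  have N_gt0 : (0 < (p ^ c.-1) ^ size (words_upto d c))%N by rewrite !expn_gt0 prime_gt0.
  split; apply: quot_le_of_sub => // z.
    case=> _ [ys [Iys zE]]; suff -> : z = ys 0%N by exact: (Iys 0%N c_gt0).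
    by apply: functional_extensionality => w; rewrite zE hat_sum_char.
  case=> ys [Lys zE]; exists (ys 0%N), (tzero R (d:=d)); split; first exact: (Lys 0%N c_gt0).
  split; first exact: hatI0.
  by apply: functional_extensionality => w; rewrite zE hat_sum_char // /tadd /tzero addr0.
set u := @FracField.tofrac R (p%:R ^+ c.-1).
have u_neq0 : u != 0 by rewrite tofrac_eq0 expf_neq0.
split.
- have sM := submod_scale_preim u sL sI.
  have [g Mg spanM] := submod_span_of_support unit_expn sM
    (fun z Mz => Lc_support c_gt0 Mz.1) (fun z Mz => Lc_integral Mz.1).
  apply: (quot_le_span residue (g := g) (s := 1)) => [|z [Lz [ys [Iys zE]]]|b].
  + exact: oner_neq0.
  + by rewrite tscale1; apply: spanM; split=> //; exact: (scale_hat_mem p_neq0 sI Ibr Iys zE).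
  + by rewrite invr1 tscale1 lcombZ; exact: (submod_lcomb b sM Mg).2.
- have [g Lg spanL] := submod_span_of_support unit_expn sL
    (fun z Lz => Lc_support c_gt0 Lz) (@Lc_integral R d c).
  apply: (quot_le_span residue (g := g) (s := u)) => // [z [ys [Lys zE]]|b].
    by apply: spanL; exact: (scale_hat_mem p_neq0 sL (@Lc_br R d c) Lys zE).
  rewrite lcombZ tscaleK //; exists (lcomb b g), (tzero R (d:=d)).
  split; first exact: submod_lcomb.
  split; first exact: hatI0.
  by apply: functional_extensionality => w; rewrite /tadd /tzero addr0.
Qed.
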